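(* Let $p>1$ and let $s,q,V:\mathbb{R}^3\to(0,\infty)$ be radially symmetric $C^2$-functions. Suppose $U(x,t)=\psi(|x|,t)\frac{x}{|x|}$, with $\psi:[0,\infty)\times\mathbb{R}\to\mathbb{R}$, is a ($C^2$) solution of $$s(x)\partial_t^2U+\nabla\times\nabla\times U+q(x)U\pm V(x)|U|^{p-1}U=0\quad\text{on }\mathbb{R}^3\times\mathbb{R}.$$ Let $a:\mathbb{R}^3\to\mathbb{R}$ be a radially symmetric $C^2$-function. Then $U_a(x,t):=U(x,t+a(x))$ also solves the same equation (with the same sign).
   Context: A function $f:\mathbb{R}^3\to\mathbb{R}$ is radially symmetric if $f(x)$ depends only on $|x|$. *)

From Stdlib Require Import Reals.
From Coquelicot Require Import Coquelicot.
Open Scope R_scope.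

Definition pt := (R * R * R)%type.
Definition x1 (x : pt) : R := fst (fst x).
Definition x2 (x : pt) : R := snd (fst x).
Definition x3 (x : pt) : R := snd x.
Definition origin : pt := (0, 0, 0).
Definition pnorm (x : pt) : R := sqrt (x1 x ^ 2 + x2 x ^ 2 + x3 x ^ 2).
Definition scal_pt (c : R) (x : pt) : pt := (c * x1 x, c * x2 x, c * x3 x).

Definition radial (f : pt -> R) : Prop :=
  forall x y : pt, pnorm x = pnorm y -> f x = f y.

Definition sfield := pt -> R -> R.
Definition vfield := pt -> R -> pt.

(* variable i (0,1,2 = space coordinates x1,x2,x3 ; 3 = time t) *)
Definition line (i : nat) (f : sfield) (x : pt) (t : R) : R -> R :=
  match i with
  | 0%nat => fun y => f (y, x2 x, x3 x) t
  | 1%nat => fun y => f (x1 x, y, x3 x) t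
  | 2%nat => fun y => f (x1 x, x2 x, y) t
  | _ => fun y => f x y
  end.
Definition coord (i : nat) (x : pt) (t : R) : R :=
  match i with
  | 0%nat => x1 x | 1%nat => x2 x | 2%nat => x3 x | _ => t
  end.

Definition dd (i : nat) (f : sfield) : sfield :=
  fun x t => Derive (line i f x t) (coord i x t).

Definition joint (f : sfield) : pt * R -> R := fun z => f (fst z) (snd z).

Definition C2 (f : sfield) : Prop :=
  (forall z, continuous (joint f) z) /\
  forall i : nat, (i < 4)%nat ->
    (forall x t, ex_derive (line i f x t) (coord i x t)) /\
    (forall z, continuous (joint (dd i f)) z) /\
    forall j : nat, (j < 4)%nat ->
      (forall x t, ex_derive (line j (dd i f) x t) (coord j x t)) /\
      (forall z, continuous (joint (dd j (dd i f))) z).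

Definition C2sp (f : pt -> R) : Prop := C2 (fun x _ => f x).

Definition vcomp (k : nat) (U : vfield) : sfield :=
  fun x t => match k with
             | 0%nat => x1 (U x t) | 1%nat => x2 (U x t) | _ => x3 (U x t)
             end.

Definition curl (U : vfield) : vfield :=
  fun x t =>
    (dd 1 (vcomp 2 U) x t - dd 2 (vcomp 1 U) x t,
     dd 2 (vcomp 0 U) x t - dd 0 (vcomp 2 U) x t,
     dd 0 (vcomp 1 U) x t - dd 1 (vcomp 0 U) x t).

(* u^e for u >= 0, with the convention 0^e = 0 (e > 0 here) *)
Definition npow (u e : R) : R :=
  if Req_EM_T u 0 then 0 else Rpower u e.

Definition solves (s q V : pt -> R) (p eps : R) (U : vfield) : Prop :=
  forall (x : pt) (t : R) (k : nat), (k < 3)%nat ->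
    s x * dd 3 (dd 3 (vcomp k U)) x t
    + vcomp k (curl (curl U)) x t
    + q x * vcomp k U x t
    + eps * V x * npow (pnorm (U x t)) (p - 1) * vcomp k U x t = 0.

From Stdlib Require Import Reals Lra Lia Classical FunctionalExtensionality.
From Coquelicot Require Import Coquelicot Derive_2d.
Open Scope R_scope.

(* A field psi(|x|, t) x/|x| is the spatial gradient of a radial function,
   hence curl-free.  Directly: for a radial scalar c, comparing points of
   equal norm gives x_k d_j c = x_j d_k c, and as U_k = x_k c this yields
   d_j U_k = d_k U_j.  So curl curl U = 0 and at each fixed x the equation is
   an ODE in t.  As a is radial, U(x, t + a x) = psi(|x|, t + a x) x/|x| is
   again of this form, hence curl-free, and at fixed x it is a time translate
   of U, so the remaining terms still cancel. *)

Definition pt_get (k : nat) (x : pt) : R :=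
  match k with 0%nat => x1 x | 1%nat => x2 x | _ => x3 x end.

Definition pt_set (k : nat) (x : pt) (y : R) : pt :=
  match k with
  | 0%nat => (y, x2 x, x3 x)
  | 1%nat => (x1 x, y, x3 x)
  | _ => (x1 x, x2 x, y)
  end.

Definition pnorm2 (x : pt) : R := x1 x ^ 2 + x2 x ^ 2 + x3 x ^ 2.

Lemma line_spatial i f x t :
  (i < 3)%nat -> line i f x t = fun y => f (pt_set i x y) t.
Proof. intros Hi; destruct i as [|[|[|i]]]; try reflexivity; lia. Qed.

Lemma coord_spatial i x t : (i < 3)%nat -> coord i x t = pt_get i x.
Proof. intros Hi; destruct i as [|[|[|i]]]; try reflexivity; lia. Qed.

Lemma pt_get_set i x y : pt_get i (pt_set i x y) = y.
Proof. destruct i as [|[|i]]; reflexivity. Qed.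

Lemma pt_get_set_other i j x y :
  i <> j -> (i < 3)%nat -> (j < 3)%nat -> pt_get j (pt_set i x y) = pt_get j x.
Proof.
  intros Hij Hi Hj.
  destruct i as [|[|[|i]]], j as [|[|[|j]]]; try reflexivity; lia.
Qed.

Lemma pt_set_get i x : pt_set i x (pt_get i x) = x.
Proof. destruct x as [[? ?] ?], i as [|[|i]]; reflexivity. Qed.

Lemma pt_set_set i x y z : pt_set i (pt_set i x y) z = pt_set i x z.
Proof. destruct i as [|[|i]]; reflexivity. Qed.

Lemma pnorm2_set i x y : pnorm2 (pt_set i x y) = pnorm2 x - pt_get i x ^ 2 + y ^ 2.
Proof.
  destruct x as [[? ?] ?]; unfold pnorm2.
  destruct i as [|[|i]]; simpl; unfold x1, x2, x3; simpl; ring.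
Qed.

Lemma pt_get_origin k : pt_get k origin = 0.
Proof. destruct k as [|[|k]]; reflexivity. Qed.

Lemma pt_set_origin_0 k : pt_set k origin 0 = origin.
Proof. destruct k as [|[|k]]; reflexivity. Qed.

Lemma pt_get_scal k c x : pt_get k (scal_pt c x) = c * pt_get k x.
Proof. destruct k as [|[|k]]; reflexivity. Qed.

Lemma neq_origin_of_get k x : pt_get k x <> 0 -> x <> origin.
Proof. intros H ->; apply H, pt_get_origin. Qed.

Lemma continuous_pair {U V W : UniformSpace} (f : U -> V) (g : U -> W) x :
  continuous f x -> continuous g x -> continuous (fun z => (f z, g z)) x.
Proof.
  intros Hf Hg; apply (continuous_comp_2 f g pair); auto.
  apply continuous_ext with (f := fun y => y); [now intros [? ?] | apply continuous_id].
Qed.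

Lemma continuous_fst' {U V : UniformSpace} (z : U * V) : continuous fst z.
Proof. destruct z; apply continuous_fst. Qed.

Lemma continuous_snd' {U V : UniformSpace} (z : U * V) : continuous snd z.
Proof. destruct z; apply continuous_snd. Qed.

Lemma continuous_pt_set_line j x (w : R * R) :
  continuous (fun w : R * R => (pt_set j x (fst w), snd w) : pt * R) w.
Proof.
  apply continuous_pair; [|apply continuous_snd'].
  destruct j as [|[|j]]; simpl;
    repeat apply continuous_pair; first [apply continuous_fst' | apply continuous_const].
Qed.

Lemma Derive_shift (g : R -> R) c t :
  ex_derive g (t + c) -> Derive (fun y => g (y + c)) t = Derive g (t + c).
Proof.
  intros Hg.
  assert (Hd : is_derive (fun y => y + c) t 1) by (auto_derive; auto; ring).
  rewrite (Derive_comp g (fun y => y + c)); [|exact Hg | now exists 1].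
  replace (Derive (fun y => y + c) t) with 1 by (symmetry; exact (is_derive_unique _ _ _ Hd)).
  ring.
Qed.

Lemma ex_derive_along_graph (f : R -> R -> R) (g : R -> R) b :
  (forall u v, ex_derive (fun z => f z v) u) ->
  ex_derive (f b) (g b) ->
  continuous (fun w : R * R => Derive (fun z => f z (snd w)) (fst w)) (b, g b) ->
  ex_derive g b ->
  ex_derive (fun y => f y (g y)) b.
Proof.
  intros Hu Hv Hc [dg Hg].
  assert (Hdiff : differentiable_pt_lim f b (g b)
                    (Derive (fun z => f z (g b)) b) (Derive (f b) (g b))).
  { apply filterdiff_differentiable_pt_lim.
    eapply filterdiff_ext_lin.
    - apply (is_derive_filterdiff f b (g b) (fun u v => Derive (fun z => f z v) u)).
      + apply filter_forall; intros [u v]; apply Derive_correct, Hu.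
      + apply Derive_correct, Hv.
      + exact Hc.
    - now intros [u v]. }
  eexists; apply is_derive_Reals.
  exact (derivable_pt_lim_comp_2d f (fun y => y) g b _ _ 1 dg Hdiff
           (derivable_pt_lim_id b) (proj1 (is_derive_Reals _ _ _) Hg)).
Qed.

(* x with x_j := y has the same norm as x with x_k := w y, where
   w y ^ 2 = x_k ^ 2 + y ^ 2 - x_j ^ 2 and w'(x_j) = x_j / x_k; the hypothesis
   x_j ^ 2 <= x_k ^ 2 keeps w y real for every y. *)
Lemma radial_partial_swap_le (f : pt -> R) j k x :
  radial f -> pt_get k x <> 0 -> pt_get j x ^ 2 <= pt_get k x ^ 2 ->
  ex_derive (fun z => f (pt_set k x z)) (pt_get k x) ->
  pt_get k x * Derive (fun y => f (pt_set j x y)) (pt_get j x)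
  = pt_get j x * Derive (fun z => f (pt_set k x z)) (pt_get k x).
Proof.
  intros Hf Hs Hle HG.
  set (s := pt_get k x) in *; set (b := pt_get j x) in *.
  set (w := fun y => s * sqrt (1 + (y ^ 2 - b ^ 2) / s ^ 2)).
  assert (Hs2 : 0 < s ^ 2) by (apply pow2_gt_0; auto).
  assert (Hpos : forall y, 0 <= 1 + (y ^ 2 - b ^ 2) / s ^ 2).
  { intros y; set (r := / s ^ 2).
    assert (0 < r) by (apply Rinv_0_lt_compat; auto).
    assert (r * s ^ 2 = 1) by (unfold r; field; lra).
    unfold Rdiv; fold r; nra. }
  assert (Hw2 : forall y, w y ^ 2 = s ^ 2 + y ^ 2 - b ^ 2).
  { intros y; unfold w; rewrite Rpow_mult_distr, <- (Rsqr_pow2 (sqrt _)), Rsqr_sqrt by apply Hpos.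
    field; lra. }
  assert (Hwb : w b = s).
  { unfold w; replace (1 + (b ^ 2 - b ^ 2) / s ^ 2) with 1 by (field; lra).
    rewrite sqrt_1; ring. }
  assert (Hsame_norm : forall y, f (pt_set j x y) = f (pt_set k x (w y))).
  { intros y; apply Hf; unfold pnorm; fold (pnorm2 (pt_set j x y)) (pnorm2 (pt_set k x (w y))).
    rewrite !pnorm2_set, Hw2; f_equal; fold s b; ring. }
  assert (Hdw : is_derive w b (b / s)).
  { unfold w; auto_derive.
    - replace (b * (b * 1) + - (b * (b * 1))) with 0 by ring; lra.
    - replace (1 + (b * (b * 1) + - (b * (b * 1))) * / (s * (s * 1))) with 1 by (field; lra).
      rewrite sqrt_1; field; lra. }
  rewrite (Derive_ext _ _ _ Hsame_norm).
  rewrite (Derive_comp (fun z => f (pt_set k x z)) w); [| now rewrite Hwb | now exists (b / s)].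
  rewrite (is_derive_unique _ _ _ Hdw), Hwb; field; auto.
Qed.

Lemma radial_partial_swap (f : pt -> R) j k x :
  radial f -> pt_get k x <> 0 ->
  ex_derive (fun y => f (pt_set j x y)) (pt_get j x) ->
  ex_derive (fun z => f (pt_set k x z)) (pt_get k x) ->
  pt_get k x * Derive (fun y => f (pt_set j x y)) (pt_get j x)
  = pt_get j x * Derive (fun z => f (pt_set k x z)) (pt_get k x).
Proof.
  intros Hf Hs HF HG.
  destruct (Rle_lt_dec (pt_get j x ^ 2) (pt_get k x ^ 2)) as [Hle|Hlt].
  - now apply radial_partial_swap_le.
  - symmetry; apply radial_partial_swap_le; auto; [|lra].
    intros E; rewrite E in Hlt.
    assert (0 < pt_get k x ^ 2) by (apply pow2_gt_0; auto); simpl in Hlt; lra.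
Qed.

Definition radial_field (psi : R -> R -> R) (U : vfield) : Prop :=
  forall x t, x <> origin -> U x t = scal_pt (psi (pnorm x) t / pnorm x) x.

Definition spatial_partials_exist (U : vfield) : Prop :=
  forall j k x t, (j < 3)%nat -> (k < 3)%nat ->
    ex_derive (fun y => pt_get k (U (pt_set j x y) t)) (pt_get j x).

Section RadialField.

Variables (psi : R -> R -> R) (U : vfield).
Hypotheses (HU : radial_field psi U) (HP : spatial_partials_exist U).

(* At the origin: u * U_k (u e_j) vanishes identically, as U_k does on the
   punctured x_j-axis, and its derivative at 0 is U_k (origin). *)
Lemma radial_field_on_plane k y t :
  (k < 3)%nat -> pt_get k y = 0 -> pt_get k (U y t) = 0.
Proof.
  intros Hk Hy.
  destruct (classic (y = origin)) as [->|Hne];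
    [|now rewrite HU, pt_get_scal, Hy by auto; ring].
  set (j := match k with 0%nat => 1%nat | _ => 0%nat end).
  assert (Hj : (j < 3)%nat) by (unfold j; destruct k; lia).
  assert (Hjk : j <> k) by (unfold j; destruct k; lia).
  set (g := fun u => pt_get k (U (pt_set j origin u) t)).
  assert (Hg : ex_derive g 0).
  { pose proof (HP j k origin t Hj Hk) as E; rewrite pt_get_origin in E; exact E. }
  assert (Hzero : forall u, u * g u = 0).
  { intros u; destruct (Req_dec u 0) as [->|Hu]; [ring|].
    unfold g; rewrite HU.
    - rewrite pt_get_scal, pt_get_set_other, pt_get_origin by auto; ring.
    - apply (neq_origin_of_get j); rewrite pt_get_set; auto. }
  assert (D : Derive (fun u => u * g u) 0 = 0).
  { rewrite (Derive_ext _ (fun _ => 0)) by auto; apply Derive_const. }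
  rewrite Derive_mult, Derive_id in D; auto using ex_derive_id.
  unfold g in D; rewrite pt_set_origin_0 in D; lra.
Qed.

Lemma radial_field_partial_sym_off_plane j k x t :
  (j < 3)%nat -> (k < 3)%nat -> j <> k -> pt_get k x <> 0 ->
  Derive (fun y => pt_get k (U (pt_set j x y) t)) (pt_get j x)
  = Derive (fun z => pt_get j (U (pt_set k x z) t)) (pt_get k x).
Proof.
  intros Hj Hk Hjk Hs.
  set (c := fun y : pt => psi (pnorm y) t / pnorm y).
  set (s := pt_get k x) in *; set (b := pt_get j x) in *.
  assert (E1 : forall y, pt_get k (U (pt_set j x y) t) = s * c (pt_set j x y)).
  { intros y; rewrite HU.
    - rewrite pt_get_scal, pt_get_set_other by auto; unfold c; fold s; ring.
    - apply (neq_origin_of_get k); rewrite pt_get_set_other; auto. }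
  assert (Hloc : locally s (fun z => z <> 0)).
  { assert (Ha : 0 < Rabs s) by (apply Rabs_pos_lt; auto).
    exists (mkposreal _ Ha); intros z Hz ->.
    change (Rabs (0 - s) < Rabs s) in Hz; rewrite Rminus_0_l, Rabs_Ropp in Hz; lra. }
  assert (E2 : forall z, z <> 0 -> pt_get k (U (pt_set k x z) t) = z * c (pt_set k x z)).
  { intros z Hz; rewrite HU.
    - rewrite pt_get_scal, pt_get_set; unfold c; ring.
    - apply (neq_origin_of_get k); rewrite pt_get_set; auto. }
  assert (E3 : forall z, z <> 0 -> pt_get j (U (pt_set k x z) t) = b * c (pt_set k x z)).
  { intros z Hz; rewrite HU.
    - rewrite pt_get_scal, pt_get_set_other by auto; unfold c; fold b; ring.
    - apply (neq_origin_of_get k); rewrite pt_get_set; auto. }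
  assert (Hcj : ex_derive (fun y => c (pt_set j x y)) b).
  { apply ex_derive_ext with (f := fun y => / s * pt_get k (U (pt_set j x y) t)).
    - intros y; cbv beta; rewrite E1, <- Rmult_assoc, Rinv_l by auto; apply Rmult_1_l.
    - apply ex_derive_scal, HP; auto. }
  assert (Hck : ex_derive (fun z => c (pt_set k x z)) s).
  { apply ex_derive_ext_loc with (f := fun z => / z * pt_get k (U (pt_set k x z) t)).
    - eapply filter_imp; [|exact Hloc]; intros z Hz; cbv beta.
      rewrite E2, <- Rmult_assoc, Rinv_l by auto; apply Rmult_1_l.
    - apply ex_derive_mult; [apply ex_derive_inv; auto; apply ex_derive_id | apply HP; auto]. }
  rewrite (Derive_ext _ (fun y => s * c (pt_set j x y))) by auto.
  rewrite (Derive_ext_loc (fun z => pt_get j (U (pt_set k x z) t)) (fun z => b * c (pt_set k x z)))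
    by (eapply filter_imp; [|exact Hloc]; intros z Hz; apply E3; auto).
  rewrite !Derive_scal.
  apply (radial_partial_swap c); auto.
  intros y1 y2 E; unfold c; rewrite E; reflexivity.
Qed.

Lemma radial_field_partial_sym j k x t :
  (j < 3)%nat -> (k < 3)%nat -> j <> k -> dd j (vcomp k U) x t = dd k (vcomp j U) x t.
Proof.
  intros Hj Hk Hjk; unfold dd.
  rewrite (line_spatial j), (line_spatial k), (coord_spatial j), (coord_spatial k) by auto.
  change (Derive (fun y => pt_get k (U (pt_set j x y) t)) (pt_get j x)
          = Derive (fun z => pt_get j (U (pt_set k x z) t)) (pt_get k x)).
  destruct (Req_dec (pt_get k x) 0) as [Hk0|Hk0];
    [destruct (Req_dec (pt_get j x) 0) as [Hj0|Hj0]|].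
  - rewrite (Derive_ext _ (fun _ => 0)), (Derive_ext (fun z => pt_get j _) (fun _ => 0)).
    + now rewrite !Derive_const.
    + intros z; apply radial_field_on_plane; auto; rewrite pt_get_set_other; auto.
    + intros y; apply radial_field_on_plane; auto; rewrite pt_get_set_other; auto.
  - symmetry; apply radial_field_partial_sym_off_plane; auto.
  - apply radial_field_partial_sym_off_plane; auto.
Qed.

Lemma radial_field_curl_free x t : curl U x t = (0, 0, 0).
Proof.
  unfold curl.
  rewrite (radial_field_partial_sym 1 2), (radial_field_partial_sym 2 0),
    (radial_field_partial_sym 0 1) by lia.
  now rewrite !Rminus_diag.
Qed.

End RadialField.

Lemma curl_curl_of_curl_free (W : vfield) :
  (forall x t, curl W x t = (0, 0, 0)) -> forall k x t, vcomp k (curl (curl W)) x t = 0.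
Proof.
  intros H k x t.
  assert (E : forall m, vcomp m (curl W) = fun _ _ => 0).
  { intros m; apply functional_extensionality; intros y;
      apply functional_extensionality; intros u.
    unfold vcomp; rewrite H; destruct m as [|[|m]]; reflexivity. }
  assert (D : forall i y u, dd i (fun _ _ => 0) y u = 0).
  { intros i y u; unfold dd; destruct i as [|[|[|i]]]; simpl; apply Derive_const. }
  unfold curl at 1; rewrite !E.
  unfold vcomp; destruct k as [|[|k]]; unfold x1, x2, x3; cbn [fst snd]; rewrite !D; ring.
Qed.

Lemma C2_ex_derive_spatial f j x t :
  C2 f -> (j < 3)%nat -> ex_derive (fun y => f (pt_set j x y) t) (pt_get j x).
Proof.
  intros [_ Hf] Hj.
  pose proof (proj1 (Hf j ltac:(lia)) x t) as E.
  now rewrite line_spatial, coord_spatial in E.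
Qed.

Lemma C2_ex_derive_time f x t : C2 f -> ex_derive (f x) t.
Proof. intros [_ Hf]; exact (proj1 (Hf 3%nat ltac:(lia)) x t). Qed.

Lemma spatial_partials_of_C2 (U : vfield) :
  (forall k, (k < 3)%nat -> C2 (vcomp k U)) -> spatial_partials_exist U.
Proof. intros HC j k x t Hj Hk; exact (C2_ex_derive_spatial _ j x t (HC k Hk) Hj). Qed.

Definition time_shift (a : pt -> R) (U : vfield) : vfield := fun x t => U x (t + a x).

Lemma radial_eq_on_axis (a : pt -> R) x : radial a -> a x = a (pnorm x, 0, 0).
Proof.
  intros Ha; apply Ha.
  set (r := pnorm x); assert (Hr : 0 <= r) by apply sqrt_pos.
  unfold pnorm, x1, x2, x3; cbn [fst snd].
  replace (r ^ 2 + 0 ^ 2 + 0 ^ 2) with (r ^ 2) by ring.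
  now rewrite sqrt_pow2.
Qed.

Lemma time_shift_radial_field psi U a :
  radial a -> radial_field psi U ->
  radial_field (fun r t => psi r (t + a (r, 0, 0))) (time_shift a U).
Proof.
  intros Ha HU x t Hx; unfold time_shift.
  now rewrite HU, <- radial_eq_on_axis.
Qed.

(* The spatial partials of U(x, t + a x) exist by the chain rule, which needs
   joint differentiability of U in (x_j, t): here from continuity of d_j U. *)
Lemma time_shift_spatial_partials (U : vfield) a :
  (forall k, (k < 3)%nat -> C2 (vcomp k U)) -> C2sp a ->
  spatial_partials_exist (time_shift a U).
Proof.
  intros HC Ha j k x t Hj Hk.
  set (f := fun u v => pt_get k (U (pt_set j x u) v)).
  set (b := pt_get j x).
  change (ex_derive (fun y => f y (t + a (pt_set j x y))) b).
  assert (Hdf : forall u v, dd j (vcomp k U) (pt_set j x u) v = Derive (fun z => f z v) u).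
  { intros u v; unfold dd; rewrite line_spatial, coord_spatial, pt_get_set by auto.
    apply Derive_ext; intros z; unfold f, vcomp; now rewrite pt_set_set. }
  apply ex_derive_along_graph.
  - intros u v.
    pose proof (spatial_partials_of_C2 U HC j k (pt_set j x u) v Hj Hk) as E.
    rewrite pt_get_set in E; eapply ex_derive_ext; [|exact E].
    intros z; cbv beta; unfold f; now rewrite pt_set_set.
  - unfold f, b; rewrite pt_set_get; exact (C2_ex_derive_time _ x _ (HC k Hk)).
  - apply continuous_ext with
      (f := fun w : R * R => joint (dd j (vcomp k U)) (pt_set j x (fst w), snd w));
      [intros w; apply Hdf|].
    apply continuous_comp with (f := fun w : R * R => (pt_set j x (fst w), snd w) : pt * R);
      [apply continuous_pt_set_line|].
    destruct (HC k Hk) as [_ HCk]; unfold b; rewrite pt_set_get.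
    exact (proj1 (proj2 (HCk j ltac:(lia))) _).
  - apply (ex_derive_plus (fun _ => t) (fun y => a (pt_set j x y))); [apply ex_derive_const|].
    exact (C2_ex_derive_spatial _ j x 0 Ha Hj).
Qed.

Lemma time_shift_dd_time2 (U : vfield) a k x t :
  C2 (vcomp k U) ->
  dd 3 (dd 3 (vcomp k (time_shift a U))) x t = dd 3 (dd 3 (vcomp k U)) x (t + a x).
Proof.
  intros HC.
  assert (E : dd 3 (vcomp k (time_shift a U)) = fun y u => dd 3 (vcomp k U) y (u + a y)).
  { apply functional_extensionality; intros y; apply functional_extensionality; intros u.
    apply (Derive_shift (vcomp k U y)), C2_ex_derive_time, HC. }
  rewrite E; apply (Derive_shift (dd 3 (vcomp k U) x)).
  destruct HC as [_ HC]; exact (proj1 (proj2 (proj2 (HC 3%nat ltac:(lia))) 3%nat ltac:(lia)) _ _).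
Qed.

Theorem lemma2p3 :
  forall (p eps : R) (s q V a : pt -> R) (psi : R -> R -> R) (U : vfield),
    1 < p ->
    (eps = 1 \/ eps = -1) ->
    radial s -> radial q -> radial V ->
    C2sp s -> C2sp q -> C2sp V ->
    (forall x, 0 < s x) -> (forall x, 0 < q x) -> (forall x, 0 < V x) ->
    (forall k : nat, (k < 3)%nat -> C2 (vcomp k U)) ->
    (forall (x : pt) (t : R), x <> origin ->
        U x t = scal_pt (psi (pnorm x) t / pnorm x) x) ->
    solves s q V p eps U ->
    radial a -> C2sp a ->
    solves s q V p eps (fun x t => U x (t + a x)).
Proof.
  intros p eps s q V a psi U _ _ _ _ _ _ _ _ _ _ _ HC HU Hsol Ha Ca.
  pose proof (radial_field_curl_free psi U HU (spatial_partials_of_C2 U HC)) as Hcurl.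
  pose proof (radial_field_curl_free _ _ (time_shift_radial_field psi U a Ha HU)
                (time_shift_spatial_partials U a HC Ca)) as Hcurl_a.
  change (solves s q V p eps (time_shift a U)).
  intros x t k Hk.
  pose proof (Hsol x (t + a x) k Hk) as S.
  rewrite (curl_curl_of_curl_free U Hcurl) in S.
  rewrite time_shift_dd_time2, (curl_curl_of_curl_free _ Hcurl_a) by auto.
  exact S.
Qed.
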